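(* Let $A,B$ be convex subsets of a real topological vector space $X$ with $A\subseteq B\subseteq\overline{A}$. Then $\operatorname{fri} A\subseteq\operatorname{fri} B\subseteq\operatorname{fri}\overline{A}$.
   Context: For a convex set $C$, a convex subset $F\subseteq C$ is a face of $C$ if for every $x\in F$ and all $y,z\in C$ with $x\in(y,z)=\{(1-t)y+tz:t\in(0,1)\}$ we have $y,z\in F$; $F_{\min}(x,C)$ is the intersection of all faces of $C$ containing $x\in C$. The face relative interior is $\operatorname{fri} C=\{x\in C: C\subseteq\overline{F_{\min}(x,C)}\}$. *)

From HB Require Import structures.
From mathcomp Require Import all_boot all_order all_algebra.
From mathcomp Require Import all_classical all_reals all_analysis.
Set Implicit Arguments. Unset Strict Implicit. Unset Printing Implicit Defensive.
Import Order.TTheory GRing.Theory Num.Theory.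
Local Open Scope classical_set_scope.
Local Open Scope ring_scope.

Definition open_segment (R : realType) (X : lmodType R) (y z : X) : set X :=
  [set (1 - t) *: y + t *: z | t in `]0, 1[%classic].

Definition convex (R : realType) (X : lmodType R) (C : set X) : Prop :=
  @convex_set R X C.

Definition is_face (R : realType) (X : lmodType R) (C F : set X) : Prop :=
  [/\ convex F, F `<=` C &
      forall x y z, F x -> C y -> C z -> open_segment y z x -> F y /\ F z].

Definition Fmin (R : realType) (X : lmodType R) (x : X) (C : set X) : set X :=
  \bigcap_(F in [set F | is_face C F /\ F x]) F.

Definition fri (R : realType) (X : topologicalLmodType R) (C : set X) : set X :=
  [set x | C x /\ C `<=` closure (Fmin x C)].

From HB Require Import structures.
From mathcomp Require Import all_boot all_order all_algebra.
From mathcomp Require Import all_classical all_reals all_analysis.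
Local Open Scope classical_set_scope.

(* If F is a face of C and D is a convex subset of C, then F ∩ D is a face of
   D; hence every face of C through a point x of D cuts out a face of D
   through x, and Fmin x D ⊆ Fmin x C.  For C ⊆ D ⊆ cl C this gives
   D ⊆ cl C ⊆ cl (Fmin x C) ⊆ cl (Fmin x D) whenever x ∈ fri C.  Both
   inclusions of the theorem are instances, the second one applied to
   B ⊆ cl A ⊆ cl B. *)

Lemma closure_subset_closure (T : topologicalType) (A B : set T) :
  A `<=` closure B -> closure A `<=` closure B.
Proof.
move=> AB; rewrite [X in _ `<=` X](closure_id (closure B)).1; last exact: closed_closure.
exact: closure_subset.
Qed.

Section Faces.
Variables (R : realType) (X : lmodType R).
Implicit Types (C D F : set X) (x : X).

Lemma convexI C D : convex C -> convex D -> convex (C `&` D).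
Proof.
move=> cC cD x y t; rewrite !in_setI => /andP[xC xD] /andP[yC yD].
by apply/andP; split; [apply: cC | apply: cD].
Qed.

Lemma is_faceI C D F : convex D -> D `<=` C -> is_face C F -> is_face D (F `&` D).
Proof.
move=> cD DC [cF FC Fface]; split; first exact: convexI.
- by move=> u [].
- move=> x y z [xF _] yD zD xyz.
  have [yF zF] := Fface x y z xF (DC _ yD) (DC _ zD) xyz.
  by split; split.
Qed.

Lemma Fmin_subset C D x : convex D -> D `<=` C -> D x -> Fmin x D `<=` Fmin x C.
Proof.
move=> cD DC Dx w Dw F [FC Fx].
by have [] : (F `&` D) w by apply: (Dw (F `&` D)); split; [exact: is_faceI cD DC FC |].
Qed.

End Faces.

Lemma fri_subset (R : realType) (X : topologicalLmodType R) (C D : set X) :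
  convex C -> C `<=` D -> D `<=` closure C -> fri C `<=` fri D.
Proof.
move=> cC CD DC x [Cx Cfri]; split; first exact: CD.
apply: (subset_trans DC); apply: closure_subset_closure.
apply: (subset_trans Cfri); apply: closure_subset.
exact: Fmin_subset.
Qed.

Theorem proposition4p8 (R : realType) (X : topologicalLmodType R) (A B : set X) :
  convex A -> convex B -> A `<=` B -> B `<=` closure A ->
  fri A `<=` fri B /\ fri B `<=` fri (closure A).
Proof.
move=> cA cB AB BA; split; first exact: fri_subset.
by apply: fri_subset => //; exact: closure_subset.
Qed.
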